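(* An even nonnegative integer $n$ satisfies $v(n)=0$ if and only if $n=2^t-2$ or $n=2^t$ for some positive integer $t$.
   Context: A hyperbinary expansion of a nonnegative integer $n$ is a word $x_0\cdots x_k$ over $\{0,1,2\}$ with $x_0\ne0$ and $\sum_i x_i2^{k-i}=n$. The empty word is the unique hyperbinary expansion of $0$. Write $\mathcal H(n)$ for the set of such expansions and $b(n)=|\mathcal H(n)|$. $A(n)$ is the directed graph on $\mathcal H(n)$ with an arc from $\mathbf x02\mathbf y$ to $\mathbf x10\mathbf y$, from $2\mathbf y$ to $10\mathbf y$, and from $\mathbf x12\mathbf y$ to $\mathbf x20\mathbf y$, for arbitrary words $\mathbf x,\mathbf y$ whenever both endpoints lie in $\mathcal H(n)$. $A(n)$ is connected. $v(n)$ denotes the cyclomatic number of $A(n)$: (number of arcs) $-\,b(n)+1$. *)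

From mathcomp Require Import all_boot.
From mathcomp Require Import all_algebra.
Set Implicit Arguments. Unset Strict Implicit. Unset Printing Implicit Defensive.

(* Words over {0,1,2} are represented as sequences of naturals, x_0 first. *)

Definition hval (w : seq nat) : nat := foldl (fun a d => a.*2 + d) 0 w.

Definition is_hyp (n : nat) (w : seq nat) : bool :=
  [&& all (fun d => d <= 2) w, (w == [::]) || (head 0 w != 0) & hval w == n].

Fixpoint words (k : nat) : seq (seq nat) :=
  if k is k'.+1 then
    flatten [seq [seq d :: w | w <- words k'] | d <- [:: 0; 1; 2]]
  else [:: [::]].

(* H(n) as an explicit duplicate-free list.  Every expansion of n has length
   at most n (if x_0 <> 0 then 2^k <= n, so k+1 <= n), so searching words of
   length <= n is exhaustive. *)
Definition hyp_list (n : nat) : seq (seq nat) :=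
  [seq w <- flatten [seq words k | k <- iota 0 n.+1] | is_hyp n w].

Definition b (n : nat) : nat := size (hyp_list n).

(* the arc relation of A(n) (endpoints' membership in H(n) checked separately):
   x02y -> x10y,  2y -> 10y,  x12y -> x20y.  Any decomposition u = x ++ _ has
   x = take i u with i = size x, so quantifying over i is exhaustive. *)
Definition arc (u w : seq nat) : bool :=
  has (fun i =>
         let x := take i u in let y := drop i.+2 u in
         ((u == x ++ [:: 0; 2] ++ y) && (w == x ++ [:: 1; 0] ++ y)) ||
         ((u == x ++ [:: 1; 2] ++ y) && (w == x ++ [:: 2; 0] ++ y)))
      (iota 0 (size u).+1)
  || (if u is 2 :: y then w == [:: 1; 0] ++ y else false).

Definition num_arcs (n : nat) : nat :=
  count (fun p : seq nat * seq nat => arc p.1 p.2)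
        [seq (u, w) | u <- hyp_list n, w <- hyp_list n].

Definition v (n : nat) : int := ((num_arcs n)%:Z - (b n)%:Z + 1)%R.

From Pilot Require Import Defs.
From mathcomp Require Import all_boot all_algebra zify.

(* Sorting expansions by their last digit gives H(2m+1) = H(m)1 and
   H(2m+2) = H(m+1)0 + H(m)2.  Every arc of A(n) either rewrites a common
   prefix, and then is an arc of A(m) or A(m+1) followed by the same last
   digit, or turns a final 2 into a 0 while incrementing the digit before it:
   the arcs w2 -> w'0, one for each expansion w of m ending in 0 or 1.
   Counting, v(2m+1) = v(m) and v(2m+2) = v(m+1) + v(m) + b01(m) - 1 with
   b01(m) >= 1 the number of such w.  So v >= 0 and v(2m+2) = 0 exactly when
   v(m) = v(m+1) = 0 and b01(m) = 1; and b01(m) = 1 exactly when m+1 or m+2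
   is a power of 2. *)

Set Implicit Arguments.
Unset Strict Implicit.
Unset Printing Implicit Defensive.

(* Otherwise [arc] would denote the cycle arcs of [path]. *)
Local Notation arc := Defs.arc.

Variant half_spec : nat -> Type :=
| HalfZero : half_spec 0
| HalfOdd m : half_spec m.*2.+1
| HalfEven m : half_spec m.*2.+2.

Lemma halfP n : half_spec n.
Proof.
case: n => [|n]; first exact: HalfZero.
have := odd_double_half n; case: (odd n) => /= <-.
  by rewrite -doubleS; apply: HalfEven.
exact: HalfOdd.
Qed.

Lemma half_ind (P : nat -> Prop) :
  P 0 -> (forall m, P m -> P m.*2.+1) -> (forall m, P m -> P m.+1 -> P m.*2.+2) ->
  forall n, P n.
Proof.
move=> P0 Podd Peven; elim/ltn_ind => n IHn.
case: n / halfP IHn => [|m|m] IHn //.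
- by apply/Podd/IHn; lia.
- by apply: Peven; apply: IHn; lia.
Qed.

Lemma mem_map_cons (T : eqType) (d a : T) (s : seq (seq T)) (w : seq T) :
  (a :: w \in [seq d :: x | x <- s]) = (a == d) && (w \in s).
Proof.
apply/mapP/andP => [[x x_s [-> ->]] | [/eqP -> w_s]] //.
by exists w.
Qed.

Lemma mem_words k w : (w \in words k) = (size w == k) && all (leq^~ 2) w.
Proof.
elim: k w => [|k IHk] [|a w] //=.
  by rewrite !mem_cat in_nil orbF; apply/negP => /or3P [] /mapP [].
rewrite !mem_cat !mem_map_cons in_nil orbF !IHk eqSS.
by case: a => [|[|[|a]]] /=; rewrite ?orbF ?andbF.
Qed.

Lemma uniq_words k : uniq (words k).
Proof.
elim: k => [|k IHk] //=.
rewrite cats0 !cat_uniq !map_inj_uniq ?IHk /= ?andbT; try by move=> x y [].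
apply/andP; split.
- by apply/hasPn => w; rewrite mem_cat => /orP [] /mapP [x _ ->]; rewrite mem_map_cons.
- by apply/hasPn => w /mapP [x _ ->]; rewrite mem_map_cons.
Qed.

Definition short_words n := flatten [seq words k | k <- iota 0 n].

Lemma mem_short_words n w :
  (w \in short_words n) = (size w < n) && all (leq^~ 2) w.
Proof.
apply/flattenP/andP => [[s /mapP [k]] | [w_short w_digits]].
  by rewrite mem_iota add0n => /andP [_ k_lt] -> /[!mem_words] /andP [/eqP -> ->].
exists (words (size w)); last by rewrite mem_words eqxx.
by apply/mapP; exists (size w); rewrite ?mem_iota.
Qed.

Lemma uniq_short_words n : uniq (short_words n).
Proof.
elim: n => [|n IHn] //.
rewrite /short_words -addn1 iotaD map_cat flatten_cat cat_uniq -/(short_words n).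
rewrite IHn /= cats0 uniq_words andbT.
by apply/hasPn => w; rewrite mem_words mem_short_words => /andP [/eqP -> _]; rewrite ltnn.
Qed.

Lemma foldl_double_add_ge a w : a * 2 ^ size w <= foldl (fun a d => a.*2 + d) a w.
Proof.
elim: w a => [|d w IHw] a /=; first by rewrite muln1.
apply: leq_trans (IHw _); rewrite expnS mulnA leq_mul2r.
by rewrite -muln2 leq_addr orbT.
Qed.

Lemma size_hyp n w : is_hyp n w -> size w <= n.
Proof.
case: w => [|d w] //= /and3P [_ d_neq0 /eqP <-].
rewrite /hval /= add0n; apply: leq_trans (foldl_double_add_ge d w).
apply: leq_trans (ltn_expl (size w) (ltnSn 1)) _.
by rewrite leq_pmull // lt0n.
Qed.

Lemma mem_hyp_list n w : (w \in hyp_list n) = is_hyp n w.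
Proof.
rewrite /hyp_list -/(short_words n.+1) mem_filter mem_short_words.
by case w_hyp: (is_hyp n w); rewrite //= ltnS size_hyp //; case/and3P: w_hyp.
Qed.

Lemma uniq_hyp_list n : uniq (hyp_list n).
Proof. by rewrite /hyp_list -/(short_words n.+1) filter_uniq // uniq_short_words. Qed.

Lemma is_hyp_hval n w : is_hyp n w = is_hyp (hval w) w && (hval w == n).
Proof. by rewrite /is_hyp eqxx andbT andbA. Qed.

Lemma is_hyp_rcons n u d :
  is_hyp n (rcons u d) =
  [&& d <= 2, is_hyp (hval u) u, (u != [::]) || (d != 0) & (hval u).*2 + d == n].
Proof.
rewrite /is_hyp all_rcons /hval foldl_rcons eqxx andbT.
by case: u => [|x u] /=; rewrite ?andbT // !andbA.
Qed.

Lemma is_hyp_rcons_odd m u d :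
  is_hyp m.*2.+1 (rcons u d) = (d == 1) && is_hyp m u.
Proof.
rewrite is_hyp_rcons [is_hyp m u]is_hyp_hval.
case: d => [|[|[|d]]]; case: (is_hyp _ u); rewrite /= ?andbF ?orbT //.
all: by [apply/eqP; lia | apply/eqP/eqP; lia].
Qed.

Lemma is_hyp_rcons_even m u d :
  is_hyp m.*2.+2 (rcons u d) = (d == 0) && is_hyp m.+1 u || (d == 2) && is_hyp m u.
Proof.
rewrite is_hyp_rcons [is_hyp m u]is_hyp_hval [is_hyp m.+1 u]is_hyp_hval.
case: d => [|[|[|d]]]; case: (is_hyp _ u); rewrite /= ?andbF ?orbF ?orbT //.
all: try by [apply/eqP; lia | apply/eqP/eqP; lia].
(* the empty word is not an expansion of [m.+1] *)
by case: u => [|x u] //=; apply/eqP/eqP; lia.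
Qed.

Lemma mem_map_rcons (T : eqType) (c d : T) (s : seq (seq T)) (u : seq T) :
  (rcons u d \in [seq rcons x c | x <- s]) = (d == c) && (u \in s).
Proof.
apply/mapP/andP => [[x x_s /rcons_inj [-> ->]] | [/eqP -> u_s]] //.
by exists u.
Qed.

Lemma nil_notin_map_rcons (T : eqType) (c : T) (s : seq (seq T)) :
  ([::] \in [seq rcons x c | x <- s]) = false.
Proof. by apply/mapP => [[[|? ?] _]]. Qed.

Lemma hyp_list_odd m :
  perm_eq (hyp_list m.*2.+1) [seq rcons u 1 | u <- hyp_list m].
Proof.
apply: uniq_perm; rewrite ?uniq_hyp_list ?map_inj_uniq ?uniq_hyp_list //.
  exact: rcons_injl.
case/lastP => [|u d]; first by rewrite mem_hyp_list nil_notin_map_rcons.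
by rewrite mem_map_rcons !mem_hyp_list is_hyp_rcons_odd.
Qed.

Lemma hyp_list_even m :
  perm_eq (hyp_list m.*2.+2)
    ([seq rcons u 0 | u <- hyp_list m.+1] ++ [seq rcons u 2 | u <- hyp_list m]).
Proof.
apply: uniq_perm; first exact: uniq_hyp_list.
  rewrite cat_uniq !map_inj_uniq ?uniq_hyp_list ?andbT //=; try exact: rcons_injl.
  by apply/hasPn => w /mapP [u _ ->]; rewrite mem_map_rcons.
case/lastP => [|u d]; first by rewrite mem_hyp_list mem_cat !nil_notin_map_rcons.
by rewrite mem_cat !mem_map_rcons !mem_hyp_list is_hyp_rcons_even.
Qed.

Inductive arc_spec : seq nat -> seq nat -> Prop :=
| Arc02 x y : arc_spec (x ++ [:: 0, 2 & y]) (x ++ [:: 1, 0 & y])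
| Arc12 x y : arc_spec (x ++ [:: 1, 2 & y]) (x ++ [:: 2, 0 & y])
| Arc2 y : arc_spec (2 :: y) [:: 1, 0 & y].

Lemma arcP u w : reflect (arc_spec u w) (arc u w).
Proof.
apply: (iffP orP) => [[/hasP [i _ /orP [] /andP [/eqP u_eq /eqP ->]] | u2] | ].
- by rewrite {1}u_eq; apply: Arc02.
- by rewrite {1}u_eq; apply: Arc12.
- by case: u u2 => [|[|[|[|?]]] y] //= /eqP ->; apply: Arc2.
have drop_prefix x a c y : drop (size x).+2 (x ++ [:: a, c & y]) = y.
  by elim: x => [|? x IHx] /=; rewrite ?drop0.
have size_prefix x y : size x \in iota 0 (size (x ++ y)).+1.
  by rewrite mem_iota size_cat ltnS leq_addr.
case=> [x y|x y|y]; [left | left | by right].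
all: apply/hasP; exists (size x); first exact: size_prefix.
all: by rewrite /= take_size_cat ?drop_prefix ?eqxx ?orbT.
Qed.

(* On the empty word, the expansion of 0, this gives [[:: 1]], the expansion of 1. *)
Definition incr_last (w : seq nat) := rcons (take (size w).-1 w) (last 0 w).+1.

Lemma incr_last_rcons x a : incr_last (rcons x a) = rcons x a.+1.
Proof. by rewrite /incr_last size_rcons last_rcons /= -[rcons x a]cats1 take_size_cat. Qed.

Lemma is_hyp_incr_last m w :
  is_hyp m w -> last 0 w <= 1 -> is_hyp m.+1 (incr_last w).
Proof.
case/lastP: w => [|u a]; first by rewrite /is_hyp /= => /eqP <-.
rewrite incr_last_rcons !is_hyp_rcons last_rcons => /and4P [_ u_hyp _ /eqP <-] a_le1.
by rewrite ltnS a_le1 u_hyp orbT addnS eqxx.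
Qed.

Lemma cat_pair (T : Type) (x : seq T) (a c : T) : x ++ [:: a; c] = rcons (rcons x a) c.
Proof. by rewrite -!cats1 -catA. Qed.

Lemma arc_rcons u w d e :
  arc (rcons u d) (rcons w e) =
  ((d == e) && arc u w) || [&& d == 2, e == 0, last 0 u <= 1 & w == incr_last u].
Proof.
apply/idP/idP.
- move/arcP; move ud: (rcons u d) => u'; move we: (rcons w e) => w' uw.
  case: uw ud we => [x y|x y|y]; case/lastP: y => [|y z];
    rewrite ?cat_pair -?rcons_cons -?rcons_cat -?[[:: 2]]/(rcons [::] 2)
      -?[[:: 1; 0]]/(rcons [:: 1] 0) => /rcons_inj [-> ->] /rcons_inj [-> ->];
    rewrite ?last_rcons ?incr_last_rcons ?eqxx ?orbT //=.
  1-3: by apply/orP; left; apply/arcP; constructor.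
- case/orP => [/andP [/eqP <- /arcP uw] | /and4P [/eqP -> /eqP -> u_last /eqP ->]];
    apply/arcP.
  + case: uw => [x y|x y|y]; rewrite ?rcons_cat; by constructor.
  + case/lastP: u u_last => [|x a]; first by move=> _; apply: Arc2 [::].
    rewrite last_rcons incr_last_rcons -!cat_pair.
    by case: a => [|[|a]] // _; constructor.
Qed.

(* The empty word is counted, since [last 0 [::] = 0]. *)
Definition b01 n := count (fun w => last 0 w <= 1) (hyp_list n).

Definition arcs_between (s t : seq (seq nat)) := \sum_(u <- s) count (arc u) t.

Lemma count_arc_allpairs s t :
  count (fun p : seq nat * seq nat => arc p.1 p.2) [seq (u, w) | u <- s, w <- t] =
  arcs_between s t.
Proof.
rewrite /arcs_between; elim: s => [|u s IHs]; first by rewrite big_nil.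
by rewrite allpairs_cons count_cat count_map IHs big_cons.
Qed.

Lemma num_arcsE n : num_arcs n = arcs_between (hyp_list n) (hyp_list n).
Proof. exact: count_arc_allpairs. Qed.

Lemma perm_arcs_between s s' t t' :
  perm_eq s s' -> perm_eq t t' -> arcs_between s t = arcs_between s' t'.
Proof.
move=> ss' tt'; rewrite /arcs_between (perm_big _ ss').
by apply: eq_bigr => u _; apply: (permP tt').
Qed.

Lemma arcs_between_catl s1 s2 t :
  arcs_between (s1 ++ s2) t = arcs_between s1 t + arcs_between s2 t.
Proof. exact: big_cat. Qed.

Lemma arcs_between_catr s t1 t2 :
  arcs_between s (t1 ++ t2) = arcs_between s t1 + arcs_between s t2.
Proof. by rewrite /arcs_between -big_split; apply: eq_bigr => u _; rewrite count_cat. Qed.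

Lemma arcs_between_rcons d s t :
  arcs_between [seq rcons u d | u <- s] [seq rcons w d | w <- t] = arcs_between s t.
Proof.
rewrite /arcs_between big_map; apply: eq_bigr => u _.
rewrite count_map; apply: eq_count => w /=.
by rewrite arc_rcons eqxx; case: d => [|[|[|d]]]; rewrite /= orbF.
Qed.

Lemma arcs_between_rcons02 s t :
  arcs_between [seq rcons u 0 | u <- s] [seq rcons w 2 | w <- t] = 0.
Proof.
rewrite /arcs_between big_map big1 // => u _.
by rewrite count_map (eq_count (a2 := pred0)) ?count_pred0 // => w; rewrite /= arc_rcons.
Qed.

Lemma arcs_between_rcons20 m :
  arcs_between [seq rcons u 2 | u <- hyp_list m]
               [seq rcons w 0 | w <- hyp_list m.+1] = b01 m.
Proof.
rewrite /arcs_between /b01 -sum1_count [RHS]big_mkcond big_map.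
apply: eq_big_seq => u /[!mem_hyp_list] u_hyp; rewrite count_map.
rewrite (eq_count (a2 := fun w => (last 0 u <= 1) && (w == incr_last u))); last first.
  by move=> w; rewrite /= arc_rcons eq_sym.
case: ifP => u_last; last by rewrite (eq_count (a2 := pred0)) ?count_pred0.
by rewrite (count_uniq_mem _ (uniq_hyp_list _)) mem_hyp_list is_hyp_incr_last.
Qed.

Lemma b_odd m : b m.*2.+1 = b m.
Proof. by rewrite /b (perm_size (hyp_list_odd m)) size_map. Qed.

Lemma b_even m : b m.*2.+2 = b m.+1 + b m.
Proof. by rewrite /b (perm_size (hyp_list_even m)) size_cat !size_map. Qed.

Lemma b01_odd m : b01 m.*2.+1 = b m.
Proof.
rewrite /b01 (permP (hyp_list_odd m)) count_map /b -count_predT.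
by apply: eq_count => w; rewrite /= last_rcons.
Qed.

Lemma b01_even m : b01 m.*2.+2 = b m.+1.
Proof.
rewrite /b01 (permP (hyp_list_even m)) count_cat !count_map /b -count_predT.
rewrite [X in _ + X](eq_count (a2 := pred0)) => [|w]; last by rewrite /= last_rcons.
by rewrite count_pred0 addn0; apply: eq_count => w; rewrite /= last_rcons.
Qed.

Lemma num_arcs_odd m : num_arcs m.*2.+1 = num_arcs m.
Proof.
by rewrite !num_arcsE (perm_arcs_between (hyp_list_odd m) (hyp_list_odd m))
  arcs_between_rcons.
Qed.

Lemma num_arcs_even m : num_arcs m.*2.+2 = num_arcs m.+1 + num_arcs m + b01 m.
Proof.
rewrite !num_arcsE (perm_arcs_between (hyp_list_even m) (hyp_list_even m)).
rewrite arcs_between_catl !arcs_between_catr !arcs_between_rcons.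
by rewrite arcs_between_rcons02 arcs_between_rcons20 addn0 [b01 m + _]addnC addnA.
Qed.

Lemma b_gt0 n : 0 < b n.
Proof.
elim/half_ind: n => [|m|m] //; first by rewrite b_odd.
by rewrite b_even addn_gt0 => _ ->.
Qed.

Lemma b01_gt0 m : 0 < b01 m.
Proof. by case: m / halfP => [|m|m]; rewrite ?b01_odd ?b01_even ?b_gt0. Qed.

Lemma b_eq1 k : b k = 1 <-> exists s, k.+1 = 2 ^ s.
Proof.
split.
- elim/half_ind: k => [|m IHm|m _ _]; first by exists 0.
  + rewrite b_odd => /IHm [s m_pred].
    by exists s.+1; rewrite expnS -m_pred; lia.
  + by rewrite b_even; have := b_gt0 m; have := b_gt0 m.+1; lia.
- case=> s; elim: s k => [|s IHs] k; first by case: k.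
  have pred_pow2 : ((2 ^ s).-1).+1 = 2 ^ s by rewrite prednK ?expn_gt0.
  rewrite expnS -pred_pow2 => k_eq.
  have -> : k = ((2 ^ s).-1).*2.+1 by lia.
  by rewrite b_odd; apply: IHs.
Qed.

Lemma b01_eq1 m : b01 m = 1 <-> exists s, m.+1 = 2 ^ s \/ m.+2 = 2 ^ s.
Proof.
case: m / halfP => [|j|j]; first by split=> // _; exists 0; left.
- rewrite b01_odd b_eq1; split=> [[s j_pred] | [[|s]]].
  + by exists s.+1; left; rewrite expnS -j_pred; lia.
  + by rewrite expn0; lia.
  + by rewrite expnS => -[j_eq|j_eq]; [exists s; lia | lia].
- rewrite b01_even b_eq1; split=> [[s j_pred] | [[|s]]].
  + by exists s.+1; right; rewrite expnS -j_pred; lia.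
  + by rewrite expn0; lia.
  + by rewrite expnS => -[j_eq|j_eq]; [lia | exists s; lia].
Qed.

Lemma v_odd m : v m.*2.+1 = v m.
Proof. by rewrite /v num_arcs_odd b_odd. Qed.

Lemma v_even m : v m.*2.+2 = (v m.+1 + v m + (b01 m)%:Z - 1)%R.
Proof. rewrite /v num_arcs_even b_even; lia. Qed.

Lemma v_ge0 n : (0 <= v n)%R.
Proof.
elim/half_ind: n => [|m|m] //; first by rewrite v_odd.
by rewrite v_even; have := b01_gt0 m; lia.
Qed.

Lemma v_even_eq0 m : v m.*2.+2 = 0%R <-> [/\ v m.+1 = 0%R, v m = 0%R & b01 m = 1].
Proof.
rewrite v_even; have := v_ge0 m; have := v_ge0 m.+1; have := b01_gt0 m.
by split=> [v0 | [-> -> ->]]; [split; lia | lia].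
Qed.

Lemma v_pred_pow2 s : v (2 ^ s).-1 = 0%R.
Proof.
elim: s => [|s IHs] //.
have -> : (2 ^ s.+1).-1 = ((2 ^ s).-1).*2.+1 by rewrite expnS; have := expn_gt0 2 s; lia.
by rewrite v_odd.
Qed.

Lemma v_pow2 s : v (2 ^ s) = 0%R.
Proof.
elim: s => [|s IHs] //.
have pred_pow2 : ((2 ^ s).-1).+1 = 2 ^ s by rewrite prednK ?expn_gt0.
have -> : 2 ^ s.+1 = ((2 ^ s).-1).*2.+2 by rewrite expnS -pred_pow2; lia.
apply/v_even_eq0; rewrite pred_pow2 v_pred_pow2; split=> //.
by apply/b01_eq1; exists s; left.
Qed.

Lemma v_pow2_sub2 s : v (2 ^ s - 2) = 0%R.
Proof.
elim: s => [|[|s] IHs] //.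
have pow2_ge2 : 2 <= 2 ^ s.+1 by rewrite expnS; have := expn_gt0 2 s; lia.
have -> : 2 ^ s.+2 - 2 = (2 ^ s.+1 - 2).*2.+2 by rewrite (expnS 2 s.+1); lia.
apply/v_even_eq0; split=> //.
  have -> : (2 ^ s.+1 - 2).+1 = (2 ^ s.+1).-1 by lia.
  exact: v_pred_pow2.
by apply/b01_eq1; exists s.+1; right; lia.
Qed.

Theorem mainTheorem2 (n : nat) :
  ~~ odd n ->
  (v n = 0%R <-> exists t : nat, 0 < t /\ (n = 2 ^ t - 2 \/ n = 2 ^ t)).
Proof.
move=> n_even; split => [v0 | [t [_ [->|->]]]]; last 2 first.
- exact: v_pow2_sub2.
- exact: v_pow2.
case: n / halfP n_even v0 => [|m|m] n_even v0.
- by exists 1; split=> //; left.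
- by rewrite /= odd_double in n_even.
case/v_even_eq0: v0 => _ _ /b01_eq1 [s m_pow2].
by exists s.+1; split=> //; rewrite expnS; lia.
Qed.
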